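(* Let $A\subseteq B$ be convex subsets of a real topological vector space $X$ such that $\operatorname{icr} A=\operatorname{fri} A$ and $A\cap\operatorname{fri} B\neq\emptyset$. Then $\operatorname{fri} A\subseteq\operatorname{fri} B$.
   Context: For a convex set $C$, a convex subset $F\subseteq C$ is a face of $C$ if for every $x\in F$ and all $y,z\in C$ with $x\in(y,z)=\{(1-t)y+tz:t\in(0,1)\}$ we have $y,z\in F$; $F_{\min}(x,C)$ is the intersection of all faces of $C$ containing $x\in C$. The intrinsic core is $\operatorname{icr} C=\{x\in C:\forall y\in C\ \exists z\in C,\ x\in(y,z)\}$ and the face relative interior is $\operatorname{fri} C=\{x\in C: C\subseteq\overline{F_{\min}(x,C)}\}$. *)

From HB Require Import structures.
From mathcomp Require Import all_boot all_order all_algebra.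
From mathcomp Require Import all_classical all_reals all_analysis.
Set Implicit Arguments. Unset Strict Implicit. Unset Printing Implicit Defensive.
Import Order.TTheory GRing.Theory Num.Theory.
Local Open Scope classical_set_scope.
Local Open Scope ring_scope.

Section faces.
Context {R : realType} {X : topologicalLmodType R}.

Definition cvx (C : set X) : Prop := @convex_set R X C.

Definition in_open_seg (x y z : X) : Prop :=
  exists t : R, 0 < t /\ t < 1 /\ x = (1 - t) *: y + t *: z.

Definition is_face (C F : set X) : Prop :=
  F `<=` C /\ cvx F /\
  forall x y z, F x -> C y -> C z -> in_open_seg x y z -> F y /\ F z.

Definition Fmin (x : X) (C : set X) : set X :=
  [set u | forall F, is_face C F -> F x -> F u].

Definition icr (C : set X) : set X :=
  [set x | C x /\ forall y, C y -> exists z, C z /\ in_open_seg x y z].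

Definition fri (C : set X) : set X :=
  [set x | C x /\ C `<=` closure (Fmin x C)].

End faces.

From HB Require Import structures.
From mathcomp Require Import all_boot all_order all_algebra.
From mathcomp Require Import all_classical all_reals all_analysis.
Local Open Scope classical_set_scope.

(* Let x be in fri A = icr A and pick x0 in A that lies in fri B.
   Because x is in the intrinsic core of A, the segment from x0 through x can
   be extended inside A: x lies in an open segment (x0, z) with z in A, hence
   with both endpoints in B.  By the very definition of a face, every face of
   B containing x then contains x0, i.e. F_min(x0, B) is contained in
   F_min(x, B).  Taking closures, B is contained in the closure of
   F_min(x0, B) (as x0 is in fri B), hence in the closure of F_min(x, B), so
   x is in fri B. *)

Section minimal_faces.
Local Set Implicit Arguments.
Local Unset Strict Implicit.
Context {R : realType} {X : topologicalLmodType R}.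
Implicit Types (A B C : set X) (x y z : X).

Lemma Fmin_open_seg C x y z :
  C y -> C z -> in_open_seg x y z -> Fmin y C `<=` Fmin x C.
Proof.
move=> Cy Cz xyz u Fmin_y_u F faceF Fx; apply: Fmin_y_u => //.
by case: faceF => _ [_ /(_ x y z Fx Cy Cz xyz)] [].
Qed.

Lemma fri_of_Fmin_sub C x y :
  C x -> fri C y -> Fmin y C `<=` Fmin x C -> fri C x.
Proof.
move=> Cx [_ C_cl_y] sub_yx; split=> //.
exact: subset_trans C_cl_y (closureS sub_yx).
Qed.

Lemma icr_Fmin_sub A B x y :
  A `<=` B -> icr A x -> A y -> Fmin y B `<=` Fmin x B.
Proof.
move=> AB [_ /(_ y)] core_xy Ay; have [z [Az xyz]] := core_xy Ay.
exact: Fmin_open_seg (AB _ Ay) (AB _ Az) xyz.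
Qed.

End minimal_faces.

Theorem proposition4p5 (R : realType) (X : topologicalLmodType R) (A B : set X) :
  cvx A -> cvx B -> A `<=` B ->
  icr A = fri A -> A `&` fri B !=set0 ->
  fri A `<=` fri B.
Proof.
move=> _ _ AB icrE [x0 [Ax0 fri_B_x0]] x fri_A_x.
have icr_A_x : icr A x by rewrite icrE.
apply: (fri_of_Fmin_sub (AB _ fri_A_x.1) fri_B_x0).
exact: icr_Fmin_sub AB icr_A_x Ax0.
Qed.
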